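(* Let $n=p_1^{m_1}\cdots p_k^{m_k}$. The essential ideal graph $\mathcal E_{\mathbb Z_n}$ is Laplacian integral if and only if all eigenvalues of $\mathbf L(\mathscr G)$ are integers.
   Context: Primes $p_1<\dots<p_k$, positive integers $m_i$, $n$ not prime. Nonzero proper ideals of $\mathbb Z_n$ are uniquely $\langle p_1^{r_1}\cdots p_k^{r_k}\rangle$, $0\le r_i\le m_i$, $(r_i)\ne(0,\dots,0),(m_1,\dots,m_k)$; essential iff $r_j\ne m_j$ for all $j$. Essential ideal graph $\mathcal E_{\mathbb Z_n}$: vertices nonzero proper ideals, distinct $I,K$ adjacent iff $I+K$ essential. A graph is Laplacian integral if all eigenvalues of its Laplacian $D-A$ are integers. $\mathscr G$: vertex set the $2^k-2$ ideals $\langle\prod_{i\in S}p_i^{m_i}\rangle$, $S$ nonempty proper subset of $\{1,\dots,k\}$ (write $\Xi_I=S$), $I\sim J$ iff $\Xi_I\cap\Xi_J=\emptyset$. $n_I=\prod_{i\notin\Xi_I}m_i$, $N_I=\sum_{J\sim I}n_J$. $\mathbf L(\mathscr G)$: matrix indexed by $V(\mathscr G)$ with diagonal entries $N_I$, $(I,J)$-entry $-n_J$ if $I\ne J$, $I\sim J$, and $0$ otherwise. *)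

From HB Require Import structures.
From mathcomp Require Import all_boot all_order all_algebra all_field.
Set Implicit Arguments. Unset Strict Implicit. Unset Printing Implicit Defensive.
Import Order.TTheory GRing.Theory Num.Theory.
Local Open Scope ring_scope.

(* ---------- Ideals of the ring 'Z_n (meaningful for 1 < n) ---------- *)
Definition is_ideal (n : nat) (I : {set 'Z_n}) : bool :=
  [&& (0 : 'Z_n) \in I,
      [forall x in I, forall y in I, x - y \in I] &
      [forall a : 'Z_n, forall x in I, a * x \in I]].

Definition ideal_sum (n : nat) (I K : {set 'Z_n}) : {set 'Z_n} :=
  [set x + y | x in I, y in K].

Definition is_essential (n : nat) (I : {set 'Z_n}) : bool :=
  is_ideal I &&
  [forall J : {set 'Z_n}, (is_ideal J && (J != [set 0])) ==> (I :&: J != [set 0])].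

Definition EVert (n : nat) : predArgType :=
  {I : {set 'Z_n} | [&& is_ideal I, I != [set 0] & I != [set: 'Z_n]]}.

Definition essential_adj (n : nat) : rel (EVert n) :=
  fun I K => (I != K) && is_essential (ideal_sum (val I) (val K)).

Definition laplacian_mx (V : finType) (adj : rel V) : 'M[algC]_#|V| :=
  \matrix_(i, j)
    (let x := enum_val i in let y := enum_val j in
     if x == y then (#|[set z | adj x z]|)%:R
     else if adj x y then -1 else 0).

Definition laplacian_integral (V : finType) (adj : rel V) : Prop :=
  forall a : algC, eigenvalue (laplacian_mx adj) a -> a \in Num.int.

(* vertex of G with Xi = S, S nonempty proper subset of {1..k} *)
Definition GVert (k : nat) : predArgType :=
  {S : {set 'I_k} | (S != set0) && (S != [set: 'I_k])}.

Definition G_adj (k : nat) : rel (GVert k) :=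
  fun S T => val S :&: val T == set0.

Definition nG (k : nat) (m : 'I_k -> nat) (S : GVert k) : nat :=
  (\prod_(i in ~: val S) m i)%N.

Definition NG (k : nat) (m : 'I_k -> nat) (S : GVert k) : nat :=
  (\sum_(T : GVert k | G_adj S T) nG m T)%N.

Definition LG_mx (k : nat) (m : 'I_k -> nat) : 'M[algC]_#|GVert k| :=
  \matrix_(i, j)
    (let S := enum_val i in let T := enum_val j in
     if S == T then (NG m S)%:R
     else if G_adj S T then - (nG m T)%:R else 0).

From HB Require Import structures.
From mathcomp Require Import all_boot all_order all_algebra all_field.
From mathcomp Require Import ring.
Import Order.TTheory GRing.Theory Num.Theory.
Local Open Scope ring_scope.
Set Implicit Arguments. Unset Strict Implicit. Unset Printing Implicit Defensive.

(* The ideals of Z_n are the d Z_n with d | n; d Z_n + d' Z_n = gcd(d, d') Z_n,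
   and e Z_n is essential iff no full prime power p_i^m_i divides e.  Labelling
   the vertex d Z_n by the set of those i with p_i^m_i | d, two vertices are
   adjacent iff their labels are disjoint.  So E_{Z_n} consists of t vertices
   with empty label, adjacent to everything, and, for each vertex S of G, an
   independent class of n_S vertices joined completely to the classes of the
   neighbours of S.
   A left eigenvector of L(G) for mu <> 0 has coordinate sum 0, and spreading it
   evenly over the classes gives a Laplacian eigenvector for mu + t.  Conversely,
   the class sums of a Laplacian eigenvector for lambda either form an
   eigenvector of L(G) for lambda - t, or all vanish (then lambda is a degree or
   a degree plus one), or the sum over the empty label is nonzero (then lambda
   is 0 or the number of vertices). *)

Lemma eigenvalue_funP (T : finType) (F : T -> T -> algC) (a : algC) :
  eigenvalue (\matrix_(i, j) F (enum_val i) (enum_val j) : 'M_#|T|) a <->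
  exists2 W : T -> algC, (forall y, \sum_x W x * F x y = a * W y) & exists x, W x != 0.
Proof.
have sum_enum (G : T -> algC) : \sum_x G x = \sum_(i < #|T|) G (enum_val i).
  by rewrite (big_enum_val (A := T)).
split.
  move/eigenvalueP=> [v hv vn0].
  exists (fun x => v 0 (enum_rank x)).
    move=> y; move/rowP: hv => /(_ (enum_rank y)).
    rewrite !mxE => <-; rewrite sum_enum; apply: eq_bigr => i _.
    by rewrite !mxE enum_valK enum_rankK.
  have [x hx] : exists x, v 0 x != 0.
    apply/existsP; apply: contraR vn0; rewrite negb_exists => /forallP h.
    by apply/eqP/rowP => j; rewrite mxE; apply/eqP; rewrite -[_ == _]negbK h.
  by exists (enum_val x); rewrite enum_valK.
move=> [W hW [x hx]]; apply/eigenvalueP.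
exists (\row_i W (enum_val i)).
  apply/rowP => j; rewrite !mxE -hW [RHS]sum_enum; apply: eq_bigr => i _.
  by rewrite !mxE.
apply: contraNneq hx => /rowP /(_ (enum_rank x)).
by rewrite !mxE enum_rankK => ->.
Qed.

Lemma eq_laplacian_mx (V : finType) (a1 a2 : rel V) :
  a1 =2 a2 -> laplacian_mx a1 = laplacian_mx a2.
Proof.
move=> eq_a; apply/matrixP => i j; rewrite !mxE /= eq_a.
by congr (if _ then _%:R else _); apply: eq_card => z; rewrite !inE eq_a.
Qed.

Lemma GVert_neq0 k (S : GVert k) : val S != set0.
Proof. by case/andP: (valP S). Qed.

Lemma G_adjC k (S T : GVert k) : G_adj S T = G_adj T S.
Proof. by rewrite /G_adj setIC. Qed.

Lemma G_adj_irr k (S : GVert k) : G_adj S S = false.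
Proof. by rewrite /G_adj setIid; apply/negbTE/GVert_neq0. Qed.

Lemma nG_gt0 k (m : 'I_k -> nat) (S : GVert k) :
  (forall i, (0 < m i)%N) -> (0 < nG m S)%N.
Proof. by move=> m_gt0; rewrite /nG prodn_gt0. Qed.

Definition LGf k (m : 'I_k -> nat) (S T : GVert k) : algC :=
  if S == T then (NG m S)%:R else if G_adj S T then - (nG m T)%:R else 0.

Lemma LG_mxE k (m : 'I_k -> nat) :
  LG_mx m = \matrix_(i, j) LGf m (enum_val i) (enum_val j).
Proof. by []. Qed.

Lemma sum_LGf_row k (m : 'I_k -> nat) (S : GVert k) : \sum_T LGf m S T = 0.
Proof.
rewrite (bigD1 S) //= /LGf eqxx /NG natr_sum.
apply/eqP; rewrite addr_eq0 -sumrN; apply/eqP.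
rewrite big_mkcond [RHS]big_mkcond; apply: eq_bigr => T _ /=.
case: (eqVneq T S) => [->|ne] /=; first by rewrite G_adj_irr.
by case: (G_adj S T); rewrite ?opprK ?oppr0.
Qed.

Lemma sum_LGf_col k (m : 'I_k -> nat) (U : GVert k -> algC) T :
  \sum_S U S * LGf m S T =
  (NG m T)%:R * U T - (nG m T)%:R * \sum_(S | G_adj S T) U S.
Proof.
rewrite (bigD1 T) //= /LGf eqxx mulrC; congr (_ + _).
rewrite mulr_sumr -sumrN big_mkcond [RHS]big_mkcond; apply: eq_bigr => S _.
case: (eqVneq S T) => [->|ne] /=; first by rewrite G_adj_irr.
by case: (G_adj S T); rewrite ?mulrN ?mulr0 ?oppr0 // mulrC.
Qed.

Lemma LG_left_eigen_sum0 k (m : 'I_k -> nat) (U : GVert k -> algC) mu :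
  (forall T, \sum_S U S * LGf m S T = mu * U T) -> mu != 0 -> \sum_S U S = 0.
Proof.
move=> hU mu_neq0; have : mu * \sum_T U T = 0.
  rewrite mulr_sumr; under eq_bigr => T _ do rewrite -hU.
  by rewrite exchange_big big1 // => S _; rewrite -mulr_sumr sum_LGf_row mulr0.
by move/eqP; rewrite mulf_eq0 (negbTE mu_neq0) => /eqP.
Qed.

Section DisjointLabels.
Variables (k : nat) (m : 'I_k -> nat) (V : finType) (tau : V -> {set 'I_k}).
Hypothesis m_gt0 : forall i, (0 < m i)%N.
Hypothesis tau_neqT : forall x, tau x != setT.
Hypothesis card_fiber : forall S : GVert k, #|[set x | tau x == val S]| = nG m S.

Definition disj_adj : rel V := fun x y => (x != y) && (tau x :&: tau y == set0).

Let univ := [set x | tau x == set0].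
Let fiber (S : GVert k) := [set x | tau x == val S].
Let t : algC := #|univ|%:R.

Lemma disj_adjC x y : disj_adj x y = disj_adj y x.
Proof. by rewrite /disj_adj eq_sym setIC. Qed.

Lemma tau_GVert x : tau x != set0 -> {T : GVert k | tau x = val T}.
Proof. by move=> h; exists (exist _ (tau x) (introT andP (conj h (tau_neqT x)))). Qed.

Lemma sum_tau0 x (H : GVert k -> algC) :
  tau x = set0 -> \sum_(S | tau x == val S) H S = 0.
Proof.
by move=> h; rewrite big_pred0 // => S; rewrite h eq_sym; apply/negbTE/GVert_neq0.
Qed.

Lemma sum_tau x T (H : GVert k -> algC) :
  tau x = val T -> \sum_(S | tau x == val S) H S = H T.
Proof.
move=> h; rewrite (bigD1 T) /= ?h ?eqxx // big1 ?addr0 // => S /andP[/eqP e ne].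
by move: ne; rewrite (val_inj e) eqxx.
Qed.

Lemma sum_over_fibers (F : V -> algC) :
  \sum_x F x = \sum_(x in univ) F x + \sum_S \sum_(x in fiber S) F x.
Proof.
rewrite (eq_bigr (fun S => \sum_x (if tau x == val S then F x else 0))); last first.
  by move=> S _; rewrite big_mkcond; apply: eq_bigr => x _; rewrite inE.
rewrite exchange_big [X in _ = X + _]big_mkcond -big_split /=.
apply: eq_bigr => x _; rewrite -big_mkcond inE.
have [/eqP h|h] := boolP (tau x == set0); first by rewrite sum_tau0 // addr0.
by have [T hT] := tau_GVert h; rewrite (sum_tau _ hT) add0r.
Qed.

Lemma sum_adj_univ y (G : V -> algC) : tau y = set0 ->
  \sum_(x | disj_adj x y) G x = \sum_x G x - G y.
Proof.
move=> h; rewrite [X in _ = X - _](bigD1 y) //= addrC addrK.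
by apply: eq_bigl => x; rewrite /disj_adj h setI0 eqxx andbT.
Qed.

Lemma sum_adj_fiber y T (G : V -> algC) : tau y = val T ->
  \sum_(x | disj_adj x y) G x =
  \sum_(x in univ) G x + \sum_(S | G_adj S T) \sum_(x in fiber S) G x.
Proof.
move=> hT; rewrite (eq_bigl (fun x => tau x :&: val T == set0)); last first.
  move=> x; rewrite /disj_adj hT; case: (eqVneq x y) => [->|_] //=.
  by rewrite hT setIid; apply/esym/negbTE/GVert_neq0.
rewrite big_mkcond sum_over_fibers; congr (_ + _).
  by apply: eq_bigr => x; rewrite inE => /eqP ->; rewrite set0I eqxx.
rewrite [RHS]big_mkcond; apply: eq_bigr => S _; rewrite /G_adj.
by case: ifP => hST; [apply: eq_bigr | apply: big1] => x; rewrite inE => /eqP ->; rewrite hST.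
Qed.

Lemma nG_neq0 (S : GVert k) : (nG m S)%:R != 0 :> algC.
Proof. by rewrite pnatr_eq0 -lt0n nG_gt0. Qed.

Lemma sum_fiber_const S (c : algC) : \sum_(x in fiber S) c = (nG m S)%:R * c.
Proof. by rewrite sumr_const card_fiber mulr_natl. Qed.

Definition deg (y : V) : algC := #|[set z | disj_adj y z]|%:R.

Definition Lapf (x y : V) : algC :=
  if x == y then deg x else if disj_adj x y then -1 else 0.

Lemma laplacian_mxE : laplacian_mx disj_adj = \matrix_(i, j) Lapf (enum_val i) (enum_val j).
Proof. by []. Qed.

Lemma sum_Lapf_col (W : V -> algC) y :
  \sum_x W x * Lapf x y = W y * deg y - \sum_(x | disj_adj x y) W x.
Proof.
rewrite (bigD1 y) //= /Lapf eqxx; congr (_ + _).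
rewrite -sumrN big_mkcond [RHS]big_mkcond; apply: eq_bigr => x _.
case: (eqVneq x y) => [->|ne] /=; first by rewrite /disj_adj eqxx.
by case: (disj_adj x y); rewrite ?mulrN1 ?mulr0 ?oppr0.
Qed.

Lemma deg_sum y : deg y = \sum_(x | disj_adj x y) 1.
Proof.
rewrite /deg -sum1_card natr_sum; apply: eq_big => [x|x _] //.
by rewrite inE disj_adjC.
Qed.

Lemma deg_fiber y T : tau y = val T -> deg y = t + (NG m T)%:R.
Proof.
move=> hT; rewrite deg_sum (sum_adj_fiber _ hT) sumr_const /t; congr (_ + _).
rewrite /NG natr_sum; apply: eq_big => [S|S _]; first by rewrite G_adjC.
by rewrite sum_fiber_const mulr1.
Qed.

(* The sum has at most one term, [S = tau x]; it is empty for [x] in [univ]. *)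
Definition spread (U : GVert k -> algC) (x : V) : algC :=
  \sum_(S | tau x == val S) U S / (nG m S)%:R.

Lemma sum_spread_fiber U S : \sum_(x in fiber S) spread U x = U S.
Proof.
rewrite (eq_bigr (fun _ => U S / (nG m S)%:R)); last first.
  by move=> x; rewrite inE => /eqP h; rewrite /spread (sum_tau _ h).
by rewrite sum_fiber_const mulrC divfK // nG_neq0.
Qed.

Lemma sum_spread_univ U : \sum_(x in univ) spread U x = 0.
Proof. by apply: big1 => x; rewrite inE => /eqP h; rewrite /spread sum_tau0. Qed.

Lemma spread_left_eigen U mu :
  (forall T, \sum_S U S * LGf m S T = mu * U T) -> \sum_S U S = 0 ->
  forall y, \sum_x spread U x * Lapf x y = (mu + t) * spread U y.
Proof.
move=> hU sumU0 y; rewrite sum_Lapf_col.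
have [/eqP hy|hy] := boolP (tau y == set0).
  rewrite sum_adj_univ // /spread sum_tau0 // mul0r mulr0 subr0 sub0r.
  rewrite sum_over_fibers sum_spread_univ add0r.
  by under eq_bigr => S _ do rewrite sum_spread_fiber; rewrite sumU0 oppr0.
have [T hT] := tau_GVert hy.
rewrite (sum_adj_fiber _ hT) (deg_fiber hT) sum_spread_univ add0r.
under eq_bigr => S _ do rewrite sum_spread_fiber.
rewrite /spread (sum_tau _ hT).
have := hU T; rewrite sum_LGf_col => e.
have nz := nG_neq0 T.
have -> : \sum_(S | G_adj S T) U S = ((NG m T)%:R * U T - mu * U T) / (nG m T)%:R.
  by rewrite -e; field.
by field.
Qed.

Lemma spread_neq0 U S : U S != 0 -> exists x, spread U x != 0.
Proof.
move=> hS; have : (0 < #|fiber S|)%N by rewrite card_fiber nG_gt0.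
case/card_gt0P => x; rewrite inE => /eqP h; exists x.
by rewrite /spread (sum_tau _ h) mulf_neq0 // invr_eq0 nG_neq0.
Qed.

Lemma laplacian_integral_LG_int :
  laplacian_integral disj_adj -> forall a, eigenvalue (LG_mx m) a -> a \in Num.int.
Proof.
move=> hL mu; rewrite LG_mxE => /eigenvalue_funP [U hU [S hS]].
have [-> | mu_neq0] := eqVneq mu 0; first exact: rpred0.
have : eigenvalue (laplacian_mx disj_adj) (mu + t).
  rewrite laplacian_mxE; apply/eigenvalue_funP; exists (spread U); last exact: spread_neq0 hS.
  exact: spread_left_eigen (LG_left_eigen_sum0 hU mu_neq0).
by move/hL => h; rewrite -(addrK t mu) rpredB // natr_int.
Qed.

Section LaplacianEigenvector.
Variables (la : algC) (W : V -> algC).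
Hypothesis W_eigen : forall y, \sum_x W x * Lapf x y = la * W y.

Let Wuniv := \sum_(x in univ) W x.
Let Wfiber S := \sum_(x in fiber S) W x.
Let Wfibers := \sum_S Wfiber S.
Let nfibers : algC := \sum_S (nG m S)%:R.

Lemma W_eigen_adj y : W y * deg y - \sum_(x | disj_adj x y) W x = la * W y.
Proof. by rewrite -sum_Lapf_col. Qed.

Lemma Wfiber_eigen T :
  (t + (NG m T)%:R) * Wfiber T - (nG m T)%:R * (Wuniv + \sum_(S | G_adj S T) Wfiber S) =
  la * Wfiber T.
Proof.
rewrite /Wfiber !mulr_sumr -sum_fiber_const -sumrB; apply: eq_bigr => y.
rewrite inE => /eqP hT; rewrite -W_eigen_adj (deg_fiber hT) (sum_adj_fiber _ hT).
by rewrite mulrC.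
Qed.

Lemma Wuniv_eigen : la * Wuniv = nfibers * Wuniv - t * Wfibers.
Proof.
have card_V : \sum_(x : V) (1 : algC) = t + nfibers.
  rewrite sum_over_fibers sumr_const; congr (_ + _).
  by apply: eq_bigr => S _; rewrite sum_fiber_const mulr1.
have sum_W : \sum_x W x = Wuniv + Wfibers by rewrite sum_over_fibers.
rewrite /Wuniv mulr_sumr.
rewrite (eq_bigr (fun y => W y * (t + nfibers) - (Wuniv + Wfibers))); last first.
  move=> y; rewrite inE => /eqP h.
  by rewrite -W_eigen_adj sum_adj_univ // deg_sum sum_adj_univ // card_V sum_W; ring.
by rewrite sumrB -mulr_suml sumr_const -/Wuniv -[X in _ - X]mulr_natl -/t; ring.
Qed.

Lemma Wfibers_eigen : la * Wfibers = t * Wfibers - nfibers * Wuniv.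
Proof.
have sum_adj_Wfiber :
    \sum_T (nG m T)%:R * \sum_(S | G_adj S T) Wfiber S = \sum_S (NG m S)%:R * Wfiber S.
  under eq_bigr => T _ do rewrite mulr_sumr.
  rewrite (exchange_big_dep predT) //=; apply: eq_bigr => S _.
  by rewrite /NG natr_sum mulr_suml; apply: eq_bigr.
rewrite /Wfibers mulr_sumr; under eq_bigr => T _ do rewrite -Wfiber_eigen.
rewrite (eq_bigr (fun T => (t * Wfiber T - (nG m T)%:R * Wuniv)
   + ((NG m T)%:R * Wfiber T - (nG m T)%:R * \sum_(S | G_adj S T) Wfiber S))); last first.
  by move=> T _; ring.
by rewrite big_split /= !sumrB -mulr_sumr -mulr_suml sum_adj_Wfiber subrr addr0.
Qed.

Lemma eigen_quotient S : Wuniv = 0 -> Wfiber S != 0 -> eigenvalue (LG_mx m) (la - t).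
Proof.
move=> Wuniv0 WfiberS; rewrite LG_mxE; apply/eigenvalue_funP; exists Wfiber; last by exists S.
move=> T; rewrite sum_LGf_col; have := Wfiber_eigen T; rewrite Wuniv0 add0r => e.
by rewrite mulrBl -e; ring.
Qed.

(* With all fiber sums zero, the eigen-equation at [x] reads [la = deg x] or
   [la = deg x + 1]. *)
Lemma eigen_fibers0_int x : Wuniv = 0 -> (forall S, Wfiber S = 0) -> W x != 0 -> la \in Num.int.
Proof.
move=> Wuniv0 Wfiber0 Wx; have := W_eigen_adj x.
have [/eqP hx|hx] := boolP (tau x == set0).
  have Wfibers0 : Wfibers = 0 by apply: big1 => S _; exact: Wfiber0.
  rewrite sum_adj_univ // sum_over_fibers -/Wuniv -/Wfibers Wuniv0 Wfibers0 add0r sub0r opprK => e.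
  have -> : la = deg x + 1 by apply: (mulIf Wx); rewrite -e; ring.
  by rewrite rpredD ?natr_int ?rpred1.
have [T hT] := tau_GVert hx.
rewrite (sum_adj_fiber _ hT) -/Wuniv Wuniv0 add0r big1 ?subr0 => [e|S _]; last exact: Wfiber0.
have -> : la = deg x by apply: (mulIf Wx); rewrite -e mulrC.
exact: natr_int.
Qed.

Lemma eigen_univ_int : Wuniv != 0 -> la \in Num.int.
Proof.
move=> Wuniv_neq0; have [-> | la_neq0] := eqVneq la 0; first exact: rpred0.
have Wfibers_opp : Wfibers = - Wuniv.
  apply/eqP; rewrite -addr_eq0 addrC; apply/eqP/(mulfI la_neq0).
  by rewrite mulrDr Wuniv_eigen Wfibers_eigen mulr0; ring.
have -> : la = nfibers + t by apply: (mulIf Wuniv_neq0); rewrite Wuniv_eigen Wfibers_opp; ring.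
by rewrite rpredD ?natr_int // /nfibers -natr_sum natr_int.
Qed.

End LaplacianEigenvector.

Lemma LG_int_laplacian_integral :
  (forall a, eigenvalue (LG_mx m) a -> a \in Num.int) -> laplacian_integral disj_adj.
Proof.
move=> hG la; rewrite laplacian_mxE => /eigenvalue_funP [W hW [x Wx]].
have [Wuniv0 | /(eigen_univ_int hW) //] := eqVneq (\sum_(x in univ) W x) 0.
have [S WfiberS | Wfiber0] := pickP (fun S => \sum_(x in fiber S) W x != 0).
  have /hG la_t_int := eigen_quotient hW Wuniv0 WfiberS.
  by rewrite -(subrK t la) rpredD // natr_int.
by apply: (eigen_fibers0_int hW Wuniv0 _ Wx) => S; apply/eqP/negbFE/Wfiber0.
Qed.

End DisjointLabels.

Section IdealsZn.
Variable n : nat.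
Hypothesis n_gt1 : (1 < n)%N.

Lemma ideal0 (I : {set 'Z_n}) : is_ideal I -> 0 \in I.
Proof. by case/and3P. Qed.

Lemma idealB (I : {set 'Z_n}) x y : is_ideal I -> x \in I -> y \in I -> x - y \in I.
Proof. by case/and3P => _ /forall_inP h _ xI yI; move/forall_inP: (h x xI); apply. Qed.

Lemma idealMl (I : {set 'Z_n}) a x : is_ideal I -> x \in I -> a * x \in I.
Proof. by case/and3P => _ _ /forallP /(_ a) /forall_inP; apply. Qed.

Lemma ideal_gcdn (I : {set 'Z_n}) (a b : nat) : is_ideal I ->
  (a%:R : 'Z_n) \in I -> (b%:R : 'Z_n) \in I -> ((gcdn a b)%:R : 'Z_n) \in I.
Proof.
move=> hI ha hb; have [->|a_gt0] := posnP a; first by rewrite gcd0n.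
have [u v def_g _] := egcdnP b a_gt0.
have -> : gcdn a b = (u * a - v * b)%N by rewrite def_g addKn.
rewrite natrB; last by rewrite def_g leq_addr.
by rewrite !natrM idealB // idealMl.
Qed.

Lemma Zn_val_lt (x : 'Z_n) : (x < n)%N.
Proof. by rewrite -[X in (_ < X)%N](Zp_cast n_gt1) ltn_ord. Qed.

Lemma Zn_natr_eq0 (a : nat) : ((a%:R : 'Z_n) == 0) = (n %| a)%N.
Proof. by rewrite -val_eqE /= val_Zp_nat. Qed.

Lemma Zn_natr_n : (n%:R : 'Z_n) = 0.
Proof. by apply/eqP; rewrite Zn_natr_eq0. Qed.

Definition ideal_of (d : nat) : {set 'Z_n} := [set x : 'Z_n | (d %| val x)%N].

Lemma mem_ideal_of d a : (d %| n)%N -> ((a%:R : 'Z_n) \in ideal_of d) = (d %| a)%N.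
Proof.
move=> dn; rewrite inE /= val_Zp_nat //.
by rewrite [in RHS](divn_eq a n) dvdn_addr // dvdn_mull.
Qed.

Lemma is_ideal_of d : (d %| n)%N -> is_ideal (ideal_of d).
Proof.
move=> dn; apply/and3P; split; first by rewrite inE dvdn0.
- apply/forall_inP => x; rewrite -[x]natr_Zp mem_ideal_of // => dx.
  apply/forall_inP => y; rewrite -[y]natr_Zp mem_ideal_of // => dy.
  have -> : ((val x)%:R : 'Z_n) - (val y)%:R = (val x + (n - val y))%:R.
    by rewrite natrD natrB ?(ltnW (Zn_val_lt y)) // Zn_natr_n sub0r.
  by rewrite mem_ideal_of // dvdn_add // dvdn_sub.
- apply/forallP => a; apply/forall_inP => x; rewrite -[x]natr_Zp -[a]natr_Zp -natrM.
  by rewrite !mem_ideal_of //; apply: dvdn_mull.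
Qed.

Lemma ideal_ofI d d' : ideal_of d :&: ideal_of d' = ideal_of (lcmn d d').
Proof. by apply/setP => x; rewrite !inE dvdn_lcm. Qed.

Lemma ideal_of_inj d d' : (d %| n)%N -> (d' %| n)%N -> ideal_of d = ideal_of d' -> d = d'.
Proof.
move=> dn d'n e; apply/eqP; rewrite eqn_dvd.
apply/andP; split.
  by rewrite -(mem_ideal_of d' dn) e mem_ideal_of.
by rewrite -(mem_ideal_of d d'n) -e mem_ideal_of.
Qed.

Lemma ideal_of_n : ideal_of n = [set 0].
Proof.
apply/setP => x; rewrite inE in_set1 -val_eqE /=.
move: (Zn_val_lt x); case: (x : nat) => [|v] v_lt; first by rewrite dvdn0.
by rewrite gtnNdvd.
Qed.

Lemma ideal_of_eq0 d : (d %| n)%N -> (ideal_of d == [set 0]) = (d == n).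
Proof.
move=> dn; apply/eqP/eqP => [|->]; last exact: ideal_of_n.
by rewrite -ideal_of_n; apply: ideal_of_inj.
Qed.

Lemma ideal_of_eqT d : (d %| n)%N -> (ideal_of d == [set: 'Z_n]) = (d == 1%N).
Proof.
move=> dn; have ideal_of1 : ideal_of 1 = [set: 'Z_n] by apply/setP => x; rewrite !inE dvd1n.
by apply/eqP/eqP => [|->] //; rewrite -ideal_of1; apply: ideal_of_inj.
Qed.

Lemma ideal_sum_of d d' : (d %| n)%N -> (d' %| n)%N ->
  ideal_sum (ideal_of d) (ideal_of d') = ideal_of (gcdn d d').
Proof.
move=> dn d'n; have gn : (gcdn d d' %| n)%N := dvdn_trans (dvdn_gcdl _ _) dn.
apply/setP => z; apply/imset2P/idP.
  case=> x y; rewrite -[x]natr_Zp -[y]natr_Zp !mem_ideal_of // => dx d'y ->.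
  rewrite -natrD mem_ideal_of // dvdn_add //.
    exact: dvdn_trans (dvdn_gcdl _ _) dx.
  exact: dvdn_trans (dvdn_gcdr _ _) d'y.
rewrite -[z]natr_Zp mem_ideal_of // => /dvdnP [c ->].
have d_gt0 : (0 < d)%N := dvdn_gt0 (ltnW n_gt1) dn.
have [u v def_g _] := egcdnP d' d_gt0.
exists (c * u * d)%:R (- (c * v * d')%:R).
- by rewrite mem_ideal_of // dvdn_mull.
- by rewrite -mulN1r idealMl ?is_ideal_of // mem_ideal_of // dvdn_mull.
have -> : (c * u * d = c * v * d' + c * gcdn d d')%N by rewrite -!mulnA def_g mulnDr.
by rewrite natrD addrAC subrr add0r mulnC.
Qed.

Definition gen (I : {set 'Z_n}) : nat := gcdn n (\big[gcdn/0]_(x in I) val x).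

Lemma gen_dvdn (I : {set 'Z_n}) : (gen I %| n)%N.
Proof. exact: dvdn_gcdl. Qed.

Lemma gen_in (I : {set 'Z_n}) : is_ideal I -> ((gen I)%:R : 'Z_n) \in I.
Proof.
move=> hI; apply: ideal_gcdn => //; first by rewrite Zn_natr_n ideal0.
by apply: (big_ind (fun g => (g%:R : 'Z_n) \in I)) => [|a b|x]; rewrite ?ideal0 ?natr_Zp //;
  exact: ideal_gcdn.
Qed.

Lemma ideal_of_gen (I : {set 'Z_n}) : is_ideal I -> I = ideal_of (gen I).
Proof.
move=> hI; apply/setP => x; rewrite inE; apply/idP/idP => [xI|/dvdnP [c def_x]].
  exact: dvdn_trans (dvdn_gcdr _ _) (biggcdn_inf _ xI (dvdnn _)).
by rewrite -[x]natr_Zp def_x natrM idealMl ?gen_in.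
Qed.

Lemma is_essential_ideal_of e : (e %| n)%N ->
  is_essential (ideal_of e) <-> (forall g, (g %| n)%N -> lcmn e g = n -> g = n).
Proof.
move=> en; split=> [/andP[_ /forallP ess] g gn eg | h].
  apply/eqP; move: (ess (ideal_of g)).
  by rewrite is_ideal_of // ideal_of_eq0 // ideal_ofI eg ideal_of_n eqxx implybF negbK.
rewrite /is_essential is_ideal_of //; apply/forallP => J; apply/implyP => /andP[hJ].
have gJn := gen_dvdn J; have lcm_n : (lcmn e (gen J) %| n)%N by rewrite dvdn_lcm en.
rewrite (ideal_of_gen hJ) ideal_ofI !ideal_of_eq0 //.
by apply: contra => /eqP eq_n; rewrite (h _ gJn eq_n).
Qed.

End IdealsZn.

Section FactoredModulus.
Variables (k : nat) (p : 'I_k -> nat).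
Hypothesis p_prime : forall i, prime (p i).
Hypothesis p_inj : injective p.

Lemma prod_pow_gt0 (r : 'I_k -> nat) : (0 < \prod_(i < k) p i ^ r i)%N.
Proof. by rewrite prodn_gt0 // => i; rewrite expn_gt0 prime_gt0. Qed.

Lemma logn_prod_pow q (r : 'I_k -> nat) :
  logn q (\prod_(i < k) p i ^ r i) = (\sum_(i < k) (if q == p i then r i else 0))%N.
Proof.
apply: (big_ind2 (fun a b => (0 < a)%N -> logn q a = b)) (prod_pow_gt0 r).
- by rewrite logn1.
- move=> a1 b1 a2 b2 IH1 IH2.
  by rewrite muln_gt0 => /andP[a1_gt0 a2_gt0]; rewrite lognM // IH1 // IH2.
- by move=> i _ _; rewrite lognX logn_prime //; case: (q == p i); rewrite ?muln1 ?muln0.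
Qed.

Lemma logn_prod_pow_at j (r : 'I_k -> nat) : logn (p j) (\prod_(i < k) p i ^ r i) = r j.
Proof.
rewrite logn_prod_pow (bigD1 j) //= eqxx big1 ?addn0 // => i ne_ij.
by case: eqP => // /p_inj e; rewrite e eqxx in ne_ij.
Qed.

Variables (m : 'I_k -> nat) (n : nat).
Hypothesis n_def : n = (\prod_(i < k) p i ^ m i)%N.

Lemma n_gt0 : (0 < n)%N.
Proof. by rewrite n_def prod_pow_gt0. Qed.

Lemma logn_n j : logn (p j) n = m j.
Proof. by rewrite n_def logn_prod_pow_at. Qed.

Lemma dvdn_full_power i : (p i ^ m i %| n)%N.
Proof. by rewrite n_def (bigD1 i) //= dvdn_mulr. Qed.

Lemma logn_dvdn_le d i : (d %| n)%N -> (logn (p i) d <= m i)%N.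
Proof. by move=> dn; rewrite -logn_n dvdn_leq_log ?n_gt0. Qed.

Lemma eq_divisors_logn d d' : (d %| n)%N -> (d' %| n)%N ->
  (forall j, logn (p j) d = logn (p j) d') -> d = d'.
Proof.
move=> dn d'n h; apply: eqn_from_log; rewrite ?(dvdn_gt0 n_gt0) // => q.
have [/existsP[j /eqP ->] | q_out] := boolP [exists j, q == p j]; first exact: h.
have logq_n : logn q n = 0%N.
  rewrite n_def logn_prod_pow big1 // => i _.
  by case: eqP => // q_pi; case/existsP: q_out; exists i; apply/eqP.
have := dvdn_leq_log q n_gt0 dn; have := dvdn_leq_log q n_gt0 d'n.
by rewrite logq_n !leqn0 => /eqP -> /eqP ->.
Qed.

Lemma full_powers_dvdn_eq d : (d %| n)%N -> (forall i, p i ^ m i %| d)%N -> d = n.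
Proof.
move=> dn h; apply: eq_divisors_logn => // j; apply/eqP.
by rewrite logn_n eqn_leq logn_dvdn_le //= -pfactor_dvdn // (dvdn_gt0 n_gt0).
Qed.

Lemma dvdn_div_prime d i : (d %| n)%N -> ~~ (p i ^ m i %| d)%N -> (d %| n %/ p i)%N.
Proof.
move=> /dvdnP [c def_n] not_full; have [/dvdnP [c' def_c] | p_ndvd_c] := boolP (p i %| c)%N.
  by rewrite def_n def_c mulnAC mulnK ?prime_gt0 // dvdn_mull.
have cop : coprime (p i ^ m i) c by rewrite coprimeXl // prime_coprime.
by move: (dvdn_full_power i); rewrite def_n Gauss_dvdr // (negbTE not_full).
Qed.

Lemma coprime_full_power_cofactor i : coprime (p i ^ m i) (n %/ p i ^ m i).
Proof.
rewrite coprimeXl // prime_coprime //; apply/negP => p_dvd.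
have : (p i ^ (m i).+1 %| n)%N.
  by rewrite expnSr -(divnK (dvdn_full_power i)) mulnC dvdn_mul.
by rewrite pfactor_dvdn ?n_gt0 // logn_n ltnn.
Qed.

Hypothesis m_gt0 : forall i, (0 < m i)%N.

Lemma full_power_gt1 i : (1 < p i ^ m i)%N.
Proof.
apply: leq_trans (prime_gt1 (p_prime i)) _.
by rewrite -{1}(expn1 (p i)) leq_pexp2l ?m_gt0 ?(prime_gt0 (p_prime i)).
Qed.

Lemma prime_dvdn i : (p i %| n)%N.
Proof. by apply: dvdn_trans (dvdn_full_power i); apply: dvdn_exp. Qed.

(* [lcm e g = n] forces [g = n] unless [e] contains a full prime power
   [p i ^ m i] of [n], in which case [g = n %/ p i ^ m i] is a proper witness. *)
Lemma lcmn_eq_n_full_power e : (e %| n)%N ->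
  (forall g, (g %| n)%N -> lcmn e g = n -> g = n) <-> (forall i, ~~ (p i ^ m i %| e)%N).
Proof.
move=> en; split=> [h i | h g gn lcm_n]; last first.
  apply: (full_powers_dvdn_eq gn) => i; apply/negPn/negP => not_full.
  have : (n %| n %/ p i)%N.
    by rewrite -{1}lcm_n dvdn_lcm !dvdn_div_prime ?h.
  rewrite gtnNdvd ?ltn_Pdiv ?prime_gt1 ?n_gt0 //.
  by rewrite divn_gt0 ?prime_gt0 // dvdn_leq ?n_gt0 ?prime_dvdn.
apply/negP => full; set q := (n %/ p i ^ m i)%N.
have q_n : (q %| n)%N by apply: dvdn_div; apply: dvdn_full_power.
have lcm_n : lcmn e q = n.
  apply/eqP; rewrite eqn_dvd dvdn_lcm en q_n /=.
  rewrite -{1}(divnK (dvdn_full_power i)) -/q mulnC Gauss_dvd ?coprime_full_power_cofactor //.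
  by rewrite dvdn_lcmr (dvdn_trans full (dvdn_lcml _ _)).
have := ltn_Pdiv (full_power_gt1 i) n_gt0.
by rewrite -/q (h q q_n lcm_n) ltnn.
Qed.

Hypothesis n_gt1 : (1 < n)%N.

Lemma is_essential_ideal_ofE e : (e %| n)%N ->
  is_essential (ideal_of n e) = [forall i, ~~ (p i ^ m i %| e)%N].
Proof.
move=> en; apply/idP/forallP.
  by move/(is_essential_ideal_of n_gt1 en)/(lcmn_eq_n_full_power en).
by move/(lcmn_eq_n_full_power en)/(is_essential_ideal_of n_gt1 en).
Qed.

Definition label (v : EVert n) : {set 'I_k} := [set i | (p i ^ m i %| gen (val v))%N].

Lemma EVert_ideal_of (v : EVert n) : val v = ideal_of n (gen (val v)).
Proof. by apply: ideal_of_gen => //; case/and3P: (valP v). Qed.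

Lemma label_neqT v : label v != setT.
Proof.
apply/negP => /eqP full; have [_ v_neq0 _] := and3P (valP v).
suff gen_n : gen (val v) = n.
  by rewrite EVert_ideal_of gen_n (ideal_of_n n_gt1) eqxx in v_neq0.
apply: (full_powers_dvdn_eq (gen_dvdn _)) => i.
by move: (in_setT i); rewrite -full inE.
Qed.

Lemma essential_adjE v w :
  essential_adj v w = (v != w) && (label v :&: label w == set0).
Proof.
rewrite /essential_adj (EVert_ideal_of v) (EVert_ideal_of w) ideal_sum_of ?gen_dvdn //.
rewrite is_essential_ideal_ofE ?(dvdn_trans (dvdn_gcdl _ _) (gen_dvdn _)) //.
congr (_ && _); apply/forallP/eqP => [h | h i].
  by apply/setP => i; rewrite !inE -dvdn_gcd (negbTE (h i)).
rewrite dvdn_gcd; apply/negP => /andP[vi wi].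
have : i \in label v :&: label w by rewrite !inE vi wi.
by rewrite h in_set0.
Qed.

Lemma EVert_of_divisor d : (d %| n)%N -> d != 1%N -> d != n ->
  exists v : EVert n, gen (val v) = d.
Proof.
move=> dn d_neq1 d_neqn.
have hv : [&& is_ideal (ideal_of n d), ideal_of n d != [set 0] & ideal_of n d != [set: 'Z_n]].
  by rewrite is_ideal_of // ideal_of_eq0 // ideal_of_eqT // d_neq1 d_neqn.
exists (exist _ (ideal_of n d) hv); apply: (ideal_of_inj n_gt1 (gen_dvdn _) dn).
by rewrite -EVert_ideal_of.
Qed.

Definition exponents (v : EVert n) : {dffun forall i : 'I_k, 'I_(m i).+1} :=
  [ffun i : 'I_k => (inord (logn (p i) (gen (val v))) : 'I_(m i).+1)].

Lemma exponentsE v i : exponents v i = logn (p i) (gen (val v)) :> nat.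
Proof. by rewrite ffunE inordK // ltnS logn_dvdn_le ?gen_dvdn. Qed.

Lemma exponents_inj : injective exponents.
Proof.
move=> v w e; apply: val_inj; rewrite (EVert_ideal_of v) (EVert_ideal_of w).
congr ideal_of; apply: eq_divisors_logn; rewrite ?gen_dvdn // => j.
by rewrite -!exponentsE e.
Qed.

Lemma mem_label v i : (i \in label v) = (exponents v i == ord_max).
Proof.
rewrite inE -val_eqE /= exponentsE pfactor_dvdn ?(dvdn_gt0 n_gt0 (gen_dvdn _)) //.
by rewrite eqn_leq logn_dvdn_le ?gen_dvdn.
Qed.

Definition label_pattern (S : {set 'I_k}) (i : 'I_k) : pred 'I_(m i).+1 :=
  if i \in S then pred1 ord_max else predC1 ord_max.

Lemma label_exponentsE v S : (label v == S) = (exponents v \in family (label_pattern S)).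
Proof.
apply/eqP/familyP => [<- i | h]; rewrite /label_pattern.
  by rewrite mem_label; case: ifP => [/eqP -> | /negbT]; rewrite !inE ?eqxx.
apply/setP => i; move: (h i); rewrite /label_pattern mem_label.
by case: (i \in S); rewrite !inE; [move/eqP ->; rewrite eqxx | move/negbTE].
Qed.

Lemma exponents_surj (S : GVert k) (r : {dffun forall i : 'I_k, 'I_(m i).+1}) :
  r \in family (label_pattern (val S)) -> exists v, exponents v = r.
Proof.
move/familyP => r_fam; pose d := (\prod_(i < k) p i ^ r i)%N.
have logn_d j : logn (p j) d = r j by rewrite logn_prod_pow_at.
have dn : (d %| n)%N.
  rewrite n_def; apply: (big_ind2 (fun a b => a %| b)%N) => // [*|i _]; first exact: dvdn_mul.
  by rewrite dvdn_exp2l // -ltnS.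
have [i0 i0S] := set0Pn _ (GVert_neq0 S).
have /set0Pn [i1] : ~: val S != set0.
  by rewrite (can2_eq setCK setCK) setC0; case/andP: (valP S).
rewrite inE => i1S.
have d_neq1 : d != 1%N.
  move: (r_fam i0); rewrite /label_pattern i0S !inE => /eqP r_i0.
  apply/negP => /eqP d1; have := m_gt0 i0.
  by rewrite -[m i0]/(nat_of_ord (@ord_max (m i0))) -r_i0 -logn_d d1 logn1.
have d_neqn : d != n.
  move: (r_fam i1); rewrite /label_pattern (negbTE i1S) !inE; apply: contraNneq => d_n.
  by apply/eqP/val_inj; rewrite /= -logn_d d_n logn_n.
have [v gen_v] := EVert_of_divisor dn d_neq1 d_neqn.
by exists v; apply/ffunP => i; apply/val_inj => /=; rewrite exponentsE gen_v logn_d.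
Qed.

Lemma card_label_fiber (S : GVert k) : #|[set v | label v == val S]| = nG m S.
Proof.
rewrite -(card_imset _ exponents_inj).
have -> : exponents @: [set v | label v == val S] =
    [set r : {dffun forall i : 'I_k, 'I_(m i).+1} in family (label_pattern (val S))].
  apply/setP => r; rewrite inE; apply/imsetP/idP => [[v] | r_fam].
    by rewrite inE label_exponentsE => fam ->.
  have [v def_r] := exponents_surj r_fam.
  by exists v; rewrite // inE label_exponentsE def_r.
rewrite cardsE card_family foldrE big_map big_enum /= /nG [RHS]big_mkcond.
apply: eq_bigr => i _; rewrite /label_pattern inE.
by case: (i \in val S); rewrite /= ?card1 ?cardC1 ?card_ord.
Qed.

End FactoredModulus.

Theorem mainTheorem12 (k : nat) (p m : 'I_k -> nat) (n : nat) :
  (forall i, prime (p i)) ->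
  (forall i j : 'I_k, (i < j)%N -> (p i < p j)%N) ->
  (forall i, (0 < m i)%N) ->
  n = (\prod_(i < k) p i ^ m i)%N ->
  (1 < n)%N -> ~~ prime n ->
  (laplacian_integral (@essential_adj n) <->
   forall a : algC, eigenvalue (LG_mx m) a -> a \in Num.int).
Proof.
move=> p_prime p_mono m_gt0 n_def n_gt1 _.
have p_inj : injective p.
  by move=> i j pij; apply/val_inj/eqP; case: ltngtP => // /p_mono; rewrite pij ltnn.
have adjE : @essential_adj n =2 disj_adj (label p m (n:=n)) by apply: essential_adjE.
rewrite /laplacian_integral (eq_laplacian_mx adjE) -/(laplacian_integral _).
have label_proper (v : EVert n) : label p m v != setT by apply: label_neqT.
have card_fiber (S : GVert k) : #|[set v : EVert n | label p m v == val S]| = nG m S.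
  by apply: card_label_fiber.
split; [exact: laplacian_integral_LG_int | exact: LG_int_laplacian_integral].
Qed.
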